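(* Let $n,m\in\mathbb Z$ and $k\le n+m$. Then, in $\mathbb C_w[x,x^{-1},y,y^{-1}]$, \[ \binom{n+m}{k}_w=\sum_{j=k-m}^{n}\binom{n}{j}_w\Big(x^jy^{n-j}\,\binom{m}{k-j}_w\,y^{j-n}x^{-j}\Big)\prod_{i=1}^{k-j}W(i+j,n-j), \] and this is an identity in the commutative ring $\mathbb C[(w(s,t))_{s,t\in\mathbb Z}]$ (after evaluating the conjugations).
   Context: Let $(w(s,t))_{s,t\in\mathbb Z}$ be commuting invertible variables, and $\mathbb C_w[x,x^{-1},y,y^{-1}]$ the associative unital $\mathbb C$-algebra generated by $x^{\pm1},y^{\pm1}$ and the $w(s,t)^{\pm1}$ subject to $x^{-1}x=xx^{-1}=1$, $y^{-1}y=yy^{-1}=1$, $yx=w(1,1)xy$, $x\,w(s,t)=w(s+1,t)x$, $y\,w(s,t)=w(s,t+1)y$. (Consequently $x^jy^{n-j}fy^{j-n}x^{-j}$ is $f$ with each $w(s,t)$ replaced by $w(s+j,t+n-j)$.) Sums $\sum_{j=u}^v$ with $v<u$ are interpreted by the convention $\sum_{j=l}^m A_j=A_l+\dots+A_m$ if $m>l-1$, $0$ if $m=l-1$, $-A_{l-1}-\dots-A_{m+1}$ if $m<l-1$. Product convention: $\prod_{j=l}^m A_j=A_l\cdots A_m$ if $m>l-1$, $=1$ if $m=l-1$, $=A_{l-1}^{-1}\cdots A_{m+1}^{-1}$ if $m<l-1$. $W(s,t)=\prod_{j=1}^tw(s,j)$. $\binom nk_w$ ($n,k\in\mathbb Z$)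 is the unique family with $\binom n0_w=\binom nn_w=1$ for all $n$ and $\binom{n+1}{k}_w=\binom nk_w+\binom n{k-1}_wW(k,n+1-k)$ whenever $(n+1,k)\ne(0,0)$. *)

From mathcomp Require Import all_boot all_order all_algebra.
Set Implicit Arguments. Unset Strict Implicit. Unset Printing Implicit Defensive.
Import Order.TTheory GRing.Theory Num.Theory.
Local Open Scope ring_scope.

Section WDefs.
Variable R : comUnitRingType.

(* Integer-indexed sum with the paper's convention:
   sum_{j=l}^m A_j = A_l+...+A_m if m > l-1, 0 if m = l-1,
   -A_{l-1}-...-A_{m+1} if m < l-1. *)
Definition zsum (l m : int) (F : int -> R) : R :=
  if l <= m + 1 then \sum_(i < `|(m + 1 - l)%R|%N) F (l + i%:Z)
  else - \sum_(i < `|(l - 1 - m)%R|%N) F (m + 1 + i%:Z).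

(* Integer-indexed product with the paper's convention:
   prod_{j=l}^m A_j = A_l...A_m if m > l-1, 1 if m = l-1,
   A_{l-1}^{-1}...A_{m+1}^{-1} if m < l-1. *)
Definition zprod (l m : int) (F : int -> R) : R :=
  if l <= m + 1 then \prod_(i < `|(m + 1 - l)%R|%N) F (l + i%:Z)
  else \prod_(i < `|(l - 1 - m)%R|%N) (F (m + 1 + i%:Z))^-1.

Definition Wf (w : int -> int -> R) (s t : int) : R := zprod 1 t (w s).

(* The substitution w(s,t) |-> w(s+a, t+b); conjugation by x^j y^(n-j)
   acts on C[w] as this substitution with a = j, b = n - j. *)
Definition wshift (w : int -> int -> R) (a b : int) : int -> int -> R :=
  fun s t => w (s + a) (t + b).

Definition is_wbinom (w : int -> int -> R) (B : int -> int -> R) : Prop :=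
  [/\ forall n, B n 0 = 1,
      forall n, B n n = 1 &
      forall n k, (n + 1, k) != (0, 0) ->
        B (n + 1) k = B n k + B n (k - 1) * Wf w k (n + 1 - k)].

End WDefs.

From mathcomp Require Import all_boot all_order all_algebra.
From mathcomp Require Import zify ring.
From Stdlib Require Import FunctionalExtensionality.
Set Implicit Arguments. Unset Strict Implicit. Unset Printing Implicit Defensive.
Import Order.TTheory GRing.Theory Num.Theory.
Local Open Scope ring_scope.

(** For fixed [n], both sides of the identity, viewed as functions of [(m, k)]
    on the region [k <= n + m], satisfy the Pascal recurrence in [m] with
    coefficient [W(k, n+m+1-k)], equal [1] on the diagonal [k = n + m], and
    agree at [m = 0] (where [(0 choose t)_w = 0] for [t < 0] leaves only the
    term [j = k]).  Since the coefficients are units, such a function is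
    determined by these data: upwards in [m] by the recurrence, downwards in [m]
    by solving the recurrence for [f m (k - 1)], by descending induction on [k]
    from the diagonal.  For the right-hand side the recurrence in [m] comes from
    that of the conjugated binomials, together with
    [W(k, n-j) W'(k-j, m+1-k+j) = W(k, n+m+1-k)] for the conjugated weights [W']. *)

Lemma int_ind_step (P : int -> Prop) :
  P 0 -> (forall b, P b -> P (b + 1)) -> (forall b, P (b + 1) -> P b) ->
  forall b, P b.
Proof.
move=> P0 PS PP; elim/int_rect => [//|j Pj|j Pj].
- by rewrite -addn1 PoszD; apply: PS.
- by apply: PP; have -> : - (j.+1)%:Z + 1 = - j%:Z by lia.
Qed.

Lemma int_ind_down (P : int -> Prop) (top : int) :
  P top -> (forall k, k <= top -> P k -> P (k - 1)) ->
  forall k, k <= top -> P k.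
Proof.
move=> Ptop PP k hk; have -> : k = top - (absz (top - k)%R)%:Z by lia.
elim: (absz (top - k)%R) => [|d IH]; first by rewrite subr0.
have -> : top - d.+1%:Z = top - d%:Z - 1 by lia.
by apply: PP => //; lia.
Qed.

Section IntBigops.
Variable R : comUnitRingType.
Implicit Types (F : int -> R) (l m a b : int).

Lemma zprod_unit l m F :
  (forall i, F i \is a GRing.unit) -> zprod l m F \is a GRing.unit.
Proof.
by move=> Fu; rewrite /zprod; case: ifP => _; apply: unitr_prod_in => i _ _; rewrite ?unitrV.
Qed.

Lemma zprod1 l m F : (forall i, F i = 1) -> zprod l m F = 1.
Proof. by move=> F1; rewrite /zprod; case: ifP => _; apply: big1 => i _; rewrite F1 ?invr1. Qed.

Lemma zprod_nil l F : zprod l (l - 1) F = 1.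
Proof. by rewrite /zprod ifT ?subrK ?subrr ?big_ord0 //; lia. Qed.

Lemma zprod_recr l a F : (forall i, F i \is a GRing.unit) ->
  zprod l (a + 1) F = zprod l a F * F (a + 1).
Proof.
move=> Fu; rewrite /zprod.
have [ha|[ha|ha]] : l <= a + 1 \/ a = l - 2 \/ a <= l - 3 by lia.
- rewrite !ifT; try lia.
  have -> : absz (a + 1 + 1 - l)%R = (absz (a + 1 - l)%R).+1 by lia.
  by rewrite big_ord_recr /=; congr (_ * F _); lia.
- rewrite ifT ?ifF; try lia.
  have -> : absz (a + 1 + 1 - l)%R = 0%N by lia.
  have -> : absz (l - 1 - a)%R = 1%N by lia.
  by rewrite big_ord0 big_ord1 addr0 mulVr.
- rewrite !ifF; try lia.
  have -> : absz (l - 1 - a)%R = (absz (l - 1 - (a + 1))%R).+1 by lia.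
  rewrite big_ord_recl addr0 mulrAC mulVr // mul1r.
  by apply: eq_bigr => i _; rewrite lift0; congr (F _)^-1; lia.
Qed.

Lemma zprod_cat l a b F : (forall i, F i \is a GRing.unit) ->
  zprod l a F * zprod 1 b (fun i => F (i + a)) = zprod l (a + b) F.
Proof.
move=> Fu.
elim/int_ind_step: b => [|b IH|b IH].
- by rewrite addr0 -[0](subrr 1) zprod_nil mulr1.
- rewrite zprod_recr // mulrA IH addrA zprod_recr //.
  by congr (_ * F _); lia.
- apply: (mulIr (Fu (b + 1 + a))); rewrite -mulrA -zprod_recr //.
  by rewrite IH addrA zprod_recr // [b + 1 + a]addrC addrA.
Qed.

Lemma zsum_recl l m F : l <= m -> zsum l m F = F l + zsum (l + 1) m F.
Proof.
move=> hlm; rewrite /zsum !ifT; try lia.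
have -> : absz (m + 1 - l)%R = (absz (m + 1 - (l + 1))%R).+1 by lia.
rewrite big_ord_recl addr0; congr (_ + _); apply: eq_bigr => i _.
by rewrite lift0; congr F; lia.
Qed.

Lemma zsum_single m F : zsum m m F = F m.
Proof.
rewrite /zsum ifT; last lia.
have -> : absz (m + 1 - m)%R = 1%N by lia.
by rewrite big_ord1 addr0.
Qed.

Lemma zsum_split l m F G :
  zsum l m (fun j => F j + G j) = zsum l m F + zsum l m G.
Proof. by rewrite /zsum; case: ifP => _; rewrite big_split // opprD. Qed.

Lemma mulr_zsuml l m F c : zsum l m (fun j => F j * c) = zsum l m F * c.
Proof. by rewrite /zsum; case: ifP => _; rewrite -mulr_suml // mulNr. Qed.

Lemma eq_zsum l m F G : l <= m + 1 ->
  (forall j, l <= j <= m -> F j = G j) -> zsum l m F = zsum l m G.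
Proof.
move=> hlm FG; rewrite /zsum hlm; apply: eq_bigr => i _.
by apply: FG; have := ltn_ord i; lia.
Qed.

Lemma zsum_eq0 l m F : l <= m + 1 ->
  (forall j, l <= j <= m -> F j = 0) -> zsum l m F = 0.
Proof.
move=> hlm F0; rewrite /zsum hlm; apply: big1 => i _.
by apply: F0; have := ltn_ord i; lia.
Qed.

End IntBigops.

Section PascalUniqueness.
Variables (R : comUnitRingType) (N : int) (c : int -> int -> R).
Hypothesis c_unit : forall m k, c m k \is a GRing.unit.

Definition pascal_rec (f : int -> int -> R) : Prop :=
  forall m k, k <= N + m -> f (m + 1) k = f m k + f m (k - 1) * c m k.

Lemma pascal_rec_unique f g : pascal_rec f -> pascal_rec g ->
  (forall m, f m (N + m) = g m (N + m)) -> (forall k, k <= N -> f 0 k = g 0 k) ->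
  forall m k, k <= N + m -> f m k = g m k.
Proof.
move=> frec grec fg_diag fg0; elim/int_ind_step => [|m IH|m IH] k hk.
- by apply: fg0; rewrite -[N]addr0.
- have [->|ne] := eqVneq k (N + (m + 1)); first exact: fg_diag.
  by rewrite frec ?grec ?IH //; lia.
- move: k hk; apply: (@int_ind_down (fun k => f m k = g m k)) => [|k hk IHk].
    exact: fg_diag.
  apply: (mulIr (c_unit m k)); apply: (addrI (f m k)).
  by rewrite -frec // IHk -grec // IH //; lia.
Qed.

End PascalUniqueness.

Section Weights.
Variables (R : comUnitRingType) (w : int -> int -> R).
Hypothesis w_unit : forall s t, w s t \is a GRing.unit.

Lemma Wf_unit s t : Wf w s t \is a GRing.unit.
Proof. exact: zprod_unit. Qed.

Lemma Wf0 s : Wf w s 0 = 1.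
Proof. by rewrite /Wf -[0](subrr 1) zprod_nil. Qed.

Lemma WfD s j a b : Wf w s a * Wf (wshift w j a) (s - j) b = Wf w s (a + b).
Proof.
rewrite /Wf; have -> : wshift w j a (s - j) = fun t => w s (t + a).
  by apply: functional_extensionality => t; rewrite /wshift subrK.
exact: zprod_cat.
Qed.

Lemma wshift0 : wshift w 0 0 = w.
Proof.
by apply: functional_extensionality => s; apply: functional_extensionality => t;
  rewrite /wshift !addr0.
Qed.

Variable B : int -> int -> R.
Hypothesis B_wbinom : is_wbinom w B.

Lemma wbinom_neg n t : 0 <= n -> t < 0 -> B n t = 0.
Proof.
have [B0 _ Brec] := B_wbinom.
have Bneg_rec n' t' : 0 <= n' -> B (n' + 1) t' = B n' t' -> B n' (t' - 1) = 0.
  move=> hn; rewrite Brec ?xpair_eqE; last lia.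
  move=> /eqP; rewrite addrC -subr_eq0 addrK => /eqP BW0.
  by apply: (mulIr (Wf_unit t' (n' + 1 - t'))); rewrite BW0 mul0r.
move=> hn ht; move: n hn; have : t <= -1 by lia.
apply: (@int_ind_down (fun t => forall n, 0 <= n -> B n t = 0)) => [|u hu IH] n hn.
- by rewrite -[-1](sub0r 1); apply: Bneg_rec; rewrite ?B0.
- by apply: Bneg_rec; rewrite ?IH //; lia.
Qed.

Lemma wbinom_pascal_rec n :
  pascal_rec n (fun m k => Wf w k (n + m + 1 - k)) (fun m k => B (n + m) k).
Proof.
have [_ _ Brec] := B_wbinom.
by move=> m k hk; rewrite addrA Brec // xpair_eqE; lia.
Qed.

End Weights.

Section WVandermonde.
Variables (R : comUnitRingType) (w : int -> int -> R).
Hypothesis w_unit : forall s t, w s t \is a GRing.unit.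
Variable binom : (int -> int -> R) -> int -> int -> R.
Hypothesis binom_wbinom :
  forall a b, is_wbinom (wshift w a b) (binom (wshift w a b)).
Variable n : int.

Definition vandermonde_term m k j : R :=
  binom w n j * binom (wshift w j (n - j)) m (k - j)
    * zprod 1 (k - j) (fun i => Wf w (i + j) (n - j)).

Definition vandermonde_sum m k : R := zsum (k - m) n (vandermonde_term m k).

Lemma vandermonde_term_rec m k j : k - m <= j ->
  vandermonde_term (m + 1) k j =
    vandermonde_term m k j + vandermonde_term m (k - 1) j * Wf w k (n + m + 1 - k).
Proof.
move=> hj; rewrite /vandermonde_term.
have [_ _ Brec] := binom_wbinom j (n - j).
rewrite Brec ?xpair_eqE; last lia.
rewrite (_ : k - 1 - j = k - j - 1); last lia.
set G := fun i => Wf w (i + j) (n - j).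
have GkE : zprod 1 (k - j) G = zprod 1 (k - j - 1) G * Wf w k (n - j).
  by rewrite -{1}[k - j](subrK 1) zprod_recr /G ?subrK // => i; apply: Wf_unit.
have -> : n + m + 1 - k = (n - j) + (m + 1 - (k - j)) by lia.
by rewrite GkE -(WfD w_unit k j (n - j) (m + 1 - (k - j))); ring.
Qed.

Lemma vandermonde_term_bottom m k :
  vandermonde_term (m + 1) k (k - m - 1) =
    vandermonde_term m (k - 1) (k - m - 1) * Wf w k (n + m + 1 - k).
Proof.
rewrite /vandermonde_term.
have [_ Bdiag _] := binom_wbinom (k - m - 1) (n - (k - m - 1)).
rewrite (_ : k - (k - m - 1) = m + 1); last lia.
rewrite (_ : k - 1 - (k - m - 1) = m); last lia.
rewrite !Bdiag zprod_recr => [|i]; last exact: Wf_unit.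
by rewrite !mulr1 -mulrA; congr (_ * (_ * Wf w _ _)); lia.
Qed.

Lemma vandermonde_sum_rec :
  pascal_rec n (fun m k => Wf w k (n + m + 1 - k)) vandermonde_sum.
Proof.
move=> m k hk; rewrite /vandermonde_sum.
rewrite (_ : k - (m + 1) = k - m - 1); last lia.
rewrite (_ : k - 1 - m = k - m - 1); last lia.
rewrite (zsum_recl (vandermonde_term (m + 1) k)); last lia.
rewrite (zsum_recl (vandermonde_term m (k - 1))) ?subrK; last lia.
rewrite (eq_zsum (G := fun j => vandermonde_term m k j
    + vandermonde_term m (k - 1) j * Wf w k (n + m + 1 - k))); first last.
- by move=> j /andP[hj _]; apply: vandermonde_term_rec.
- lia.
by rewrite zsum_split mulr_zsuml vandermonde_term_bottom; ring.
Qed.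

Lemma vandermonde_sum_diag m : vandermonde_sum m (n + m) = 1.
Proof.
have [_ Bdiag _] := binom_wbinom 0 0; rewrite wshift0 in Bdiag.
have [_ Bdiag' _] := binom_wbinom n (n - n).
rewrite /vandermonde_sum (_ : n + m - m = n); last lia.
rewrite zsum_single /vandermonde_term (_ : n + m - n = m); last lia.
by rewrite Bdiag Bdiag' !mul1r; apply: zprod1 => i; rewrite subrr Wf0.
Qed.

Lemma vandermonde_sum0 k : k <= n -> vandermonde_sum 0 k = binom w n k.
Proof.
move=> hk; rewrite /vandermonde_sum subr0 zsum_recl // zsum_eq0 ?addr0; first last.
- move=> j /andP[hj _]; rewrite /vandermonde_term.
  have wj_unit s t : wshift w j (n - j) s t \is a GRing.unit by apply: w_unit.
  by rewrite (wbinom_neg wj_unit (binom_wbinom j (n - j))) ?mulr0 ?mul0r //; lia.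
- lia.
have [B0 _ _] := binom_wbinom k (n - k).
by rewrite /vandermonde_term subrr B0 -[0](subrr 1) zprod_nil !mulr1.
Qed.

End WVandermonde.

Theorem corollary2 (R : comUnitRingType) (w : int -> int -> R)
    (hw : forall s t, w s t \is a GRing.unit)
    (binom : (int -> int -> R) -> int -> int -> R)
    (hbinom : forall a b, is_wbinom (wshift w a b) (binom (wshift w a b)))
    (n m k : int) (hk : k <= n + m) :
  binom w (n + m) k =
  zsum (k - m) n (fun j =>
    binom w n j * binom (wshift w j (n - j)) m (k - j)
      * zprod 1 (k - j) (fun i => Wf w (i + j) (n - j))).
Proof.
have wB : is_wbinom w (binom w) by have := hbinom 0 0; rewrite wshift0.
have [_ Bdiag _] := wB.
have Wu m' k' : Wf w k' (n + m' + 1 - k') \is a GRing.unit by apply: Wf_unit.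
apply: (pascal_rec_unique Wu (f := fun m k => binom w (n + m) k)
          (g := vandermonde_sum w binom n)) hk.
- exact: wbinom_pascal_rec.
- exact: vandermonde_sum_rec.
- by move=> m'; rewrite Bdiag vandermonde_sum_diag.
- by move=> k' hk'; rewrite addr0 vandermonde_sum0.
Qed.
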